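(* Let $\xi$ be an $(I,T)$-system with the stuttering property, and let $n\ge 0$. Then $d(I,T) \leq n$ if and only if the formula $I(S_1)$ is redundant in $\exists S_0\cdots\exists S_n\,[\,I(S_0)\wedge I(S_1) \wedge T_{0,1}\wedge\dots\wedge T_{n,n+1}\,]$, i.e. if and only if $$\exists S_0\cdots\exists S_n\,[\,I(S_0)\wedge T_{0,1}\wedge\dots\wedge T_{n,n+1}\,] \;\equiv\; \exists S_0\cdots\exists S_n\,[\,I(S_0)\wedge I(S_1)\wedge T_{0,1}\wedge\dots\wedge T_{n,n+1}\,]$$ as Boolean functions of $S_{n+1}$.
   Context: An $(I,T)$-system is a transition system over a finite set $S$ of Boolean state variables, given by a propositional formula $I(S)$ (initial states) and a propositional formula $T(S,S')$ (transition relation), where $S'$ is a copy of $S$. A state is a complete assignment to $S$. A trace $(s_0,\dots,s_k)$ is valid if $I(s_0)=1$ and $T(s_i,s_{i+1})=1$ for $i=0,\dots,k-1$; then $s_k$ is reachable in $k$ transitions. The system has the stuttering property if $T(s,s)=1$ for every state $s$. The reachability diameter $d(I,T)$ is the smallest $n\ge0$ such that every state reachable in some number of transitions is reachable in at most $n$ transitions. Notation: $S_j$ is a copy of the state variables for time frame $j$; $T_{j,j+1}$ denotes $T(S_j,S_{j+1})$; $I(S_0)$, $I(S_1)$ are copies of $I$ over $S_0$, $S_1$. A conjunct $A$ is redundant in $\exists W[A\wedge B]$ if $\exists W[A\wedge B]\equiv\exists W[B]$, where $\equiv$ means equality as Boolean functions of the free variables. *)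

From mathcomp Require Import all_boot.
Set Implicit Arguments. Unset Strict Implicit. Unset Printing Implicit Defensive.

(* States over a finite set V of Boolean state variables: complete assignments. *)
Definition state (V : finType) := {ffun V -> bool}.

(* A propositional formula I(S) / T(S,S') is represented by the Boolean
   function it denotes. *)

Definition chain (V : finType) (T : state V -> state V -> bool)
  (tr : nat -> state V) (k : nat) : Prop :=
  forall i, i < k -> T (tr i) (tr i.+1).

Definition reachable_in (V : finType) (I : state V -> bool)
  (T : state V -> state V -> bool) (k : nat) (s : state V) : Prop :=
  exists tr : nat -> state V, [/\ I (tr 0), chain T tr k & tr k = s].

Definition reachable (V : finType) (I : state V -> bool)
  (T : state V -> state V -> bool) (s : state V) : Prop :=
  exists k, reachable_in I T k s.

Definition stuttering (V : finType) (T : state V -> state V -> bool) : Prop :=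
  forall s : state V, T s s.

Definition diam_bound (V : finType) (I : state V -> bool)
  (T : state V -> state V -> bool) (n : nat) : Prop :=
  forall s, reachable I T s -> exists2 k, k <= n & reachable_in I T k s.

Definition is_diameter (V : finType) (I : state V -> bool)
  (T : state V -> state V -> bool) (d : nat) : Prop :=
  diam_bound I T d /\ forall m, diam_bound I T m -> d <= m.

(** Under stuttering, a state reachable in [k] transitions is reachable in
    every [m >= k] transitions (repeat the initial state).  Hence
    [d(I,T) <= n] holds iff one more transition reaches nothing new, i.e.
    iff the states reachable in [n.+1] and in [n] transitions coincide: if
    one more transition reaches nothing new, induction on the trace length
    collapses every reachable state into [n] transitions.  The two sides of
    the equivalence are these two sets: adding [I(S_1)] makes [S_1] a second
    initial state, and [T_{0,1}] then holds by stuttering. *)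

From mathcomp Require Import all_boot.

Set Implicit Arguments.
Unset Strict Implicit.
Unset Printing Implicit Defensive.

Section Reachability.

Variables (V : finType) (I : state V -> bool) (T : state V -> state V -> bool).

Lemma reachable_in_extend k s s' :
  reachable_in I T k s -> T s s' -> reachable_in I T k.+1 s'.
Proof.
move=> [tr [tr0 trT trk]] Tss'.
exists (fun i => if i <= k then tr i else s'); split.
- by [].
- move=> i; rewrite ltnS => le_ik /=; rewrite le_ik.
  move: le_ik; rewrite leq_eqVlt => /predU1P[-> | lt_ik].
  + by rewrite ltnn trk.
  + by rewrite lt_ik; apply: trT.
- by rewrite ltnn.
Qed.

Lemma reachable_in_last k s' :
  reachable_in I T k.+1 s' ->
  exists2 s, reachable_in I T k s & T s s'.
Proof.
move=> [tr [tr0 trT <-]]; exists (tr k); last exact: trT.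
by exists tr; split=> // i ltik; apply: trT; apply: ltnW.
Qed.

Lemma diam_bound_widen n m :
  n <= m -> diam_bound I T n -> diam_bound I T m.
Proof.
move=> le_nm bound_n s /bound_n [k le_kn reach_k].
by exists k => //; apply: leq_trans le_nm.
Qed.

Hypothesis stutterT : stuttering T.

Lemma reachable_in_widen k m s :
  k <= m -> reachable_in I T k s -> reachable_in I T m s.
Proof.
move=> /subnK <-; elim: (m - k) => [|j IHj] //= reach_s.
exact: reachable_in_extend (IHj reach_s) (stutterT s).
Qed.

Lemma reachable_in_second_initial n s :
  (exists tr : nat -> state V,
     [/\ tr n.+1 = s, I (tr 0), I (tr 1) & chain T tr n.+1]) <->
  reachable_in I T n s.
Proof.
split.
- move=> [tr [trs _ tr1 trT]]; exists (fun i => tr i.+1).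
  by split=> // i ltin; apply: trT.
- move=> [tr [tr0 trT trs]]; exists (fun i => tr i.-1); split=> //.
  by case=> [|i] ltin /=; [apply: stutterT | apply: trT].
Qed.

Lemma reachable_in_collapse n :
  (forall s, reachable_in I T n.+1 s -> reachable_in I T n s) ->
  forall k s, reachable_in I T k s -> reachable_in I T n s.
Proof.
move=> stable; elim=> [|k IHk] s reach_s.
- exact: reachable_in_widen reach_s.
- have [s0 reach_s0 Ts0s] := reachable_in_last reach_s.
  exact/stable/(reachable_in_extend (IHk _ reach_s0) Ts0s).
Qed.

Lemma diam_boundP n :
  diam_bound I T n <->
  (forall s, reachable_in I T n.+1 s -> reachable_in I T n s).
Proof.
split=> [bound_n s reach_s | stable s [k reach_s]].
- have [k le_kn reach_k] := bound_n s (ex_intro _ n.+1 reach_s).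
  exact: reachable_in_widen reach_k.
- by exists n => //; apply: reachable_in_collapse reach_s.
Qed.

End Reachability.

Theorem proposition1 (V : finType) (I : state V -> bool)
  (T : state V -> state V -> bool) (n : nat) (d : nat) :
  stuttering T -> is_diameter I T d ->
  (d <= n <->
   forall s : state V,
     (exists tr : nat -> state V,
        [/\ tr n.+1 = s, I (tr 0) & chain T tr n.+1]) <->
     (exists tr : nat -> state V,
        [/\ tr n.+1 = s, I (tr 0), I (tr 1) & chain T tr n.+1])).
Proof.
move=> stutterT [bound_d min_d].
have reach_succE s : (exists tr : nat -> state V,
    [/\ tr n.+1 = s, I (tr 0) & chain T tr n.+1]) <-> reachable_in I T n.+1 s.
  by split=> -[tr [? ? ?]]; exists tr.
have le_dnE : d <= n <-> diam_bound I T n.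
  by split=> [le_dn | /min_d //]; apply: diam_bound_widen bound_d.
apply: (iff_trans le_dnE); apply: (iff_trans (diam_boundP I stutterT n)).
have second_initialE := reachable_in_second_initial I stutterT n.
split=> [stable s | eq_reach s /reach_succE/eq_reach/second_initialE //].
split=> [/reach_succE/stable/second_initialE // | /second_initialE reach_s].
apply/reach_succE; exact: (reachable_in_widen stutterT (leqnSn n) reach_s).
Qed.
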